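(* Let a locally compact group $G$ act continuously on a locally compact space $X$. Let $(g_i)_{i\ge0}$ be a sequence in $G$ and $\mu$ a probability measure on $X$ such that $(g_i\cdot\mu)_{i\ge0}$ converges weakly to some $\mu_\infty$. Assume there is a sequence $(h_i)_{i\ge0}$ in $G$ converging to the identity such that $(h_i\cdot\mu)_{i\ge0}$ converges strongly to $\mu$, and such that $(g_ih_ig_i^{-1})_{i\ge0}$ has a limit point $g_\infty$ in $G$. Then $g_\infty\cdot\mu_\infty=\mu_\infty$.
   Context: A sequence $(\mu_i)$ of bounded measures converges strongly to $\mu_\infty$ if there is a real sequence $\epsilon_i\to0$ such that $|(\mu_i-\mu_\infty)(\varphi)|\le\epsilon_i\|\varphi\|_\infty$ for every bounded measurable function $\varphi$. Weak convergence means convergence against compactly supported continuous functions. *)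

From HB Require Import structures.
From mathcomp Require Import all_boot all_order all_algebra.
From mathcomp Require Import all_classical all_reals all_analysis.

Set Implicit Arguments.
Unset Strict Implicit.
Unset Printing Implicit Defensive.

Import Order.TTheory GRing.Theory Num.Theory.
Import numFieldNormedType.Exports.

Local Open Scope classical_set_scope.
Local Open Scope ring_scope.

Definition borelType (X : ptopologicalType) := g_sigma_algebraType (@open X).

Definition Cc (X : ptopologicalType) (R : realType) (phi : X -> R) : Prop :=
  continuous phi /\
  exists K : set X, compact K /\ (forall x, ~ K x -> phi x = 0).

Definition bounded_fun (T : Type) (R : realType) (phi : T -> R) : Prop :=
  exists M : R, forall x, `|phi x| <= M.

Definition supnorm (T : Type) (R : realType) (phi : T -> R) : R :=
  sup [set `|phi x| | x in [set: T]].

Lemma continuous_borel_measurable (X Y : ptopologicalType) (f : X -> Y) :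
  continuous f -> measurable_fun [set: borelType X] (f : borelType X -> borelType Y).
Proof.
move=> cf.
apply: (@measurability _ _ (borelType X) (borelType Y) setT _ (@open Y)).
  by [].
move=> _ [A oA <-]; apply: sub_sigma_algebra; rewrite setTI.
by apply: open_comp => // x _; exact: cf.
Qed.

Section PushMeasure.
Context d d' (T1 : measurableType d) (T2 : measurableType d') (R : realType).
Variables (f : T1 -> T2) (mf : measurable_fun [set: T1] f).
Variable (m : {measure set T1 -> \bar R}).

Definition pushm : set T2 -> \bar R := let _ := mf in pushforward m f.

Let pushm0 : pushm set0 = 0%E.
Proof. by rewrite /pushm /pushforward preimage_set0 measure0. Qed.

Let pushm_ge0 A : (0 <= pushm A)%E.
Proof. exact: measure_ge0. Qed.

Let pushm_sigma_additive : semi_sigma_additive pushm.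
Proof.
move=> F mF tF mUF; rewrite /pushm /pushforward preimage_bigcup.
apply: measure_semi_sigma_additive.
- by move=> n; rewrite -[X in measurable X]setTI; exact: mf.
- apply/trivIsetP => /= i j _ _ ij; rewrite -preimage_setI.
  by move/trivIsetP : tF => /(_ _ _ _ _ ij) ->//; rewrite preimage_set0.
- by rewrite -preimage_bigcup -[X in measurable X]setTI; exact: mf.
Qed.

HB.instance Definition _ := isMeasure.Build _ _ _
  pushm pushm0 pushm_ge0 pushm_sigma_additive.

End PushMeasure.

Lemma act_continuous (G : topologicalType) (X : ptopologicalType)
  (act : G -> X -> X) (act_cont : continuous (fun p : G * X => act p.1 p.2))
  (g : G) : continuous (act g).
Proof.
move=> x.
have -> : act g = (fun p : G * X => act p.1 p.2) \o (fun y => (g, y)) by [].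
apply: continuous_comp; last exact: act_cont.
by apply: cvg_pair => //; exact: cvg_cst.
Qed.

(* The image g . m of a measure m on X under the action:
   (g . m)(A) = m (g^-1 A) = m (act g @^-1` A). *)
Definition act_meas (G : topologicalType) (X : ptopologicalType) (R : realType)
  (act : G -> X -> X) (act_cont : continuous (fun p : G * X => act p.1 p.2))
  (g : G) (m : {measure set borelType X -> \bar R})
  : {measure set borelType X -> \bar R} :=
  @pushm _ _ (borelType X) (borelType X) R (act g) (@continuous_borel_measurable X X (act g) (@act_continuous G X act act_cont g)) m.

Definition weak_cvg (X : ptopologicalType) (R : realType)
  (mus : nat -> {measure set borelType X -> \bar R}) (m : {measure set borelType X -> \bar R})
  : Prop :=
  forall phi : X -> R, Cc phi ->
    (fun i => (\int[mus i]_x (phi x)%:E)%E) @ \oo --> (\int[m]_x (phi x)%:E)%E.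

Definition strong_cvg (X : ptopologicalType) (R : realType)
  (mus : nat -> {measure set borelType X -> \bar R}) (m : {measure set borelType X -> \bar R})
  : Prop :=
  exists eps : nat -> R, eps @ \oo --> 0 /\
    forall (i : nat) (phi : borelType X -> R),
      measurable_fun [set: borelType X] phi -> bounded_fun phi ->
      (`| \int[mus i]_x (phi x)%:E - \int[m]_x (phi x)%:E | <=
        (eps i * supnorm phi)%:E)%E.

(* Equality of measures as Radon measures (i.e. as functionals on C_c(X)). *)
Definition radon_eq (X : ptopologicalType) (R : realType)
  (m1 m2 : {measure set borelType X -> \bar R}) : Prop :=
  forall phi : X -> R, Cc phi ->
    (\int[m1]_x (phi x)%:E = \int[m2]_x (phi x)%:E)%E.

From HB Require Import structures.
From mathcomp Require Import all_boot all_order all_algebra.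
From mathcomp Require Import all_classical all_reals all_analysis.
From mathcomp Require Import measurable_realfun lra.

Import Order.TTheory GRing.Theory Num.Theory.
Import numFieldNormedType.Exports.

Local Open Scope classical_set_scope.
Local Open Scope ring_scope.

(* Fix phi in C_c(X).  The integrals of phi o g_inf and of phi against g_i mu
   converge to the two sides of the claimed identity.  With k_i = g_i h_i g_i^-1
   we have k_i g_i = g_i h_i, so their difference is the integral of
   phi o g_inf o g_i - phi o k_i o g_i against mu, plus the integral of
   phi o g_i against h_i mu - mu.  The first term is small whenever k_i is
   close to g_inf, by uniform continuity of phi o act on the compact support of
   phi, and this happens for infinitely many i because g_inf is a limit point;
   the second term is at most eps_i sup|phi| by strong convergence. *)

Lemma cvg_eq_frequently_close {R : realType} {u v : R^nat} {a b : R} :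
  u @ \oo --> a -> v @ \oo --> b ->
  (forall r, 0 < r -> forall N, exists i, (N <= i)%N /\ `|u i - v i| <= r) ->
  a = b.
Proof.
move=> ua vb close; apply/eqP; rewrite -subr_eq0 -normr_le0.
apply/ler_addgt0Pr => r r0; rewrite add0r.
have r20 : 0 < r / 2 by rewrite divr_gt0.
have [N _ nearN] := cvgr_dist_lt _ _ (cvgB ua vb) _ r20.
have [i [Ni uvi]] := close _ r20 N.
have := nearN i Ni; rewrite /= => abi.
have -> : a - b = (a - b - (u i - v i)) + (u i - v i) by rewrite subrK.
by apply: (le_trans (ler_normD _ _)); lra.
Qed.

Lemma fin_num_abse_le {R : realType} {x : \bar R} {M : R} :
  (`|x| <= M%:E)%E -> x \is a fin_num.
Proof. by case: x => //=; rewrite leye_eq. Qed.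

Lemma cvge_eq_frequently_close {R : realType} {a b : (\bar R)^nat} {A B : \bar R}
    {M : R} :
  (forall i, (`|a i| <= M%:E)%E) -> (forall i, (`|b i| <= M%:E)%E) ->
  a @ \oo --> A -> b @ \oo --> B ->
  (forall r, 0 < r -> forall N, exists i, (N <= i)%N /\ (`|a i - b i| <= r%:E)%E) ->
  A = B.
Proof.
move=> aM bM aA bB close.
have fineP (c : (\bar R)^nat) C : (forall i, (`|c i| <= M%:E)%E) -> c @ \oo --> C ->
    C = (fine C)%:E /\ fine \o c @ \oo --> fine C.
  move=> cM cC; have Cfin : C \is a fin_num.
    apply: (fin_num_abse_le (M := M)); apply: (cvge_to_le (cvg_abse cC)); exact: nearW.
  split; first by rewrite fineK.
  by move: cC; rewrite -(fineK Cfin) => /fine_cvgP[].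
have [-> fa] := fineP _ _ aM aA; have [-> fb] := fineP _ _ bM bB.
congr (_%:E); apply: cvg_eq_frequently_close fa fb _ => r r0 N.
have [i [Ni abi]] := close r r0 N; exists i; split => //=.
by rewrite -(fineK (fin_num_abse_le (aM i))) -(fineK (fin_num_abse_le (bM i))) in abi.
Qed.

Lemma lee_abs_subB {R : realType} {x y z : \bar R} :
  y \is a fin_num -> (`|x - z| <= `|x - y| + `|y - z|)%E.
Proof.
move=> yfin; rewrite -{1}(subeK x yfin) -(addeA (x - y)%E); exact: lee_abs_add.
Qed.

Lemma continuous_borel_measurableR {X : ptopologicalType} {R : realType}
    {f : X -> R} :
  continuous f -> measurable_fun [set: borelType X] (f : borelType X -> R).
Proof.
move=> /continuousP cf.
apply: (measurability _ (measurable_realfun.RGenOpens.measurableE R)).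
move=> _ [_ [a [b ->]] <-]; apply: sub_sigma_algebra; rewrite setTI.
exact/cf/interval_open.
Qed.

Lemma integral_pushm d d' (T1 : measurableType d) (T2 : measurableType d')
    (R : realType) (f : T1 -> T2) (mf : measurable_fun [set: T1] f)
    (m : {measure set T1 -> \bar R}) (phi : T2 -> \bar R) :
  measurable_fun [set: T2] phi ->
  (\int[pushm mf m]_x phi x = \int[m]_x phi (f x))%E.
Proof.
move=> mphi; rewrite [RHS]integralE.
rewrite -[fun x => phi (f x)]/(phi \o f) funepos_comp funeneg_comp.
rewrite -[in RHS](preimage_setT f) -!ge0_integral_pushforward //.
- by rewrite integralE.
- exact: measurable_funeneg.
- exact: measurable_funepos.
Qed.

Section probability_bounded_integral.
Context {d : measure_display} {T : measurableType d} {R : realType}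
  {m : {measure set T -> \bar R}}.
Hypothesis m1 : m setT = 1%E.

Lemma integral_abse_le_bound {f : T -> R} {M : R} :
  measurable_fun setT f -> (forall x, `|f x| <= M) ->
  (\int[m]_x `|(f x)%:E| <= M%:E)%E.
Proof.
move=> mf fM; apply: (@le_trans _ _ (\int[m]_x (cst M%:E x))%E).
  apply: ge0_le_integral => //.
  - by apply/measurable_EFinP; exact: measurableT_comp.
  - by move=> x _; rewrite /= lee_fin.
by rewrite integral_cst // m1 mule1.
Qed.

Lemma integrable_bounded {f : T -> R} {M : R} :
  measurable_fun setT f -> (forall x, `|f x| <= M) -> m.-integrable setT (EFin \o f).
Proof.
move=> mf fM; apply/integrableP; split; first exact/measurable_EFinP.
exact: le_lt_trans (integral_abse_le_bound mf fM) (ltry _).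
Qed.

Lemma abse_integral_le_bound {f : T -> R} {M : R} :
  measurable_fun setT f -> (forall x, `|f x| <= M) ->
  (`|\int[m]_x (f x)%:E| <= M%:E)%E.
Proof.
move=> mf fM; apply: le_trans (integral_abse_le_bound mf fM).
by apply: le_abse_integral => //; exact/measurable_EFinP.
Qed.

Lemma abse_integralB_le {f g : T -> R} {M r : R} :
  measurable_fun setT f -> measurable_fun setT g ->
  (forall x, `|f x| <= M) -> (forall x, `|g x| <= M) ->
  (forall x, `|f x - g x| <= r) ->
  (`|\int[m]_x (f x)%:E - \int[m]_x (g x)%:E| <= r%:E)%E.
Proof.
move=> mf mg fM gM fgr.
rewrite -(integralB_EFin _ (integrable_bounded mf fM) (integrable_bounded mg gM)) //.
under eq_integral do rewrite -EFinB.
by apply: abse_integral_le_bound => //; exact: measurable_funB.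
Qed.

End probability_bounded_integral.

Lemma supnorm_le {T : pointedType} {R : realType} {f : T -> R} {M : R} :
  (forall x, `|f x| <= M) -> 0 <= supnorm f <= M.
Proof.
move=> fM; have ne : [set `|f x| | x in [set: T]] !=set0 by exists `|f point|, point.
apply/andP; split.
  apply: le_trans (normr_ge0 (f point)) _.
  by apply: ub_le_sup => //; exists M => _ [x _ <-]; exact: fM.
by apply: ge_sup => // _ [x _ <-]; exact: fM.
Qed.

Lemma strong_cvg_bound {X : ptopologicalType} {R : realType}
    {mus : nat -> {measure set borelType X -> \bar R}}
    {m : {measure set borelType X -> \bar R}} :
  strong_cvg mus m -> exists eps : R^nat, eps @ \oo --> 0 /\
    forall i (phi : borelType X -> R) (M : R),
      measurable_fun [set: borelType X] phi -> (forall x, `|phi x| <= M) ->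
      (`|\int[mus i]_x (phi x)%:E - \int[m]_x (phi x)%:E| <= (eps i * M)%:E)%E.
Proof.
move=> [eps [eps0 epsP]]; exists (fun i => `|eps i|); split.
  by rewrite -(@normr0 _ R); exact: cvg_norm.
move=> i phi M mphi phiM; have /andP[s0 sM] := supnorm_le phiM.
apply: (le_trans (epsP i phi mphi (ex_intro _ M phiM))); rewrite lee_fin.
by apply: le_trans (ler_wpM2r s0 (ler_norm _)) _; exact: ler_wpM2l.
Qed.

Lemma Cc_bounded {X : ptopologicalType} {R : realType} {phi : X -> R} :
  Cc phi -> exists M, forall x, `|phi x| <= M.
Proof.
move=> [cphi [K [cK phiK]]].
have [M0 [_ HM0]] : bounded_set (phi @` K).
  by apply/compact_bounded/continuous_compact => //; exact: continuous_subspaceT.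
exists (`|M0| + 1) => x; have [Kx|nKx] := pselect (K x).
  by apply: (HM0 (`|M0| + 1)); [rewrite (le_lt_trans (ler_norm _)) // ltrDl | exists x].
by rewrite phiK // normr0 addr_ge0.
Qed.

Lemma cluster_frequently {T : topologicalType} {u : nat -> T} {p : T}
    {P : T -> Prop} {Q : nat -> Prop} :
  cluster (u @ \oo) p -> (\forall k \near p, P k) -> (\forall i \near \oo, Q i) ->
  exists i, P (u i) /\ Q i.
Proof.
move=> up Pp Qoo; have uQ : (u @ \oo) (u @` Q).
  by apply: filterS Qoo => i Qi; exists i.
by have [_ [[i Qi <-] Pui]] := up _ _ uQ Pp; exists i.
Qed.

Section group_action.
Context {R : realType} {G : topologicalType} {mul : G -> G -> G} {inv : G -> G} {e : G}.
Hypotheses (mulA : forall a b c, mul a (mul b c) = mul (mul a b) c)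
  (mul1g : forall a, mul e a = a) (mulVg : forall a, mul (inv a) a = e)
  (mul_cont : continuous (fun p : G * G => mul p.1 p.2))
  (inv_cont : continuous inv).
Context {X : ptopologicalType} {act : G -> X -> X}.
Hypotheses (act1 : forall x, act e x = x)
  (actM : forall a b x, act (mul a b) x = act a (act b x))
  (act_cont : continuous (fun p : G * X => act p.1 p.2)).

Lemma mulgV a : mul a (inv a) = e.
Proof.
rewrite -[LHS]mul1g -[X in mul X _](mulVg (inv a)) -mulA (mulA (inv a)).
by rewrite mulVg mul1g mulVg.
Qed.

Lemma mulg1 a : mul a e = a.
Proof. by rewrite -(mulVg a) mulA mulgV mul1g. Qed.

Lemma actK a : cancel (act a) (act (inv a)).
Proof. by move=> x; rewrite -actM mulVg act1. Qed.

Lemma continuous_mul2 (f1 f2 : G -> G) :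
  continuous f1 -> continuous f2 -> continuous (fun k => mul (f1 k) (f2 k)).
Proof.
move=> cf1 cf2 k.
apply: (@continuous_comp _ _ _ (fun k => (f1 k, f2 k)) (fun p : G * G => mul p.1 p.2)).
  exact: cvg_pair (cf1 k) (cf2 k).
exact: mul_cont.
Qed.

Lemma continuous_comp_act {phi : X -> R} a :
  continuous phi -> continuous (fun x => phi (act a x)).
Proof.
by move=> cphi x; apply: continuous_comp; [exact: act_continuous | exact: cphi].
Qed.

Lemma Cc_act {phi : X -> R} a :
  Cc phi -> Cc (fun x => phi (act a x)).
Proof.
move=> [cphi [K [cK phiK]]]; split; first exact: continuous_comp_act.
exists (act (inv a) @` K); split.
  by apply: continuous_compact => //; apply/continuous_subspaceT/act_continuous.
move=> x nK; apply: phiK => Kx; apply: nK.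
by exists (act a x); rewrite ?actK.
Qed.

Lemma near_e_act_close {phi : X -> R} {K : set X} {r : R} :
  continuous phi -> compact K -> 0 < r ->
  \forall m \near e, forall y, K y -> `|phi (act m y) - phi y| < r.
Proof.
move=> cphi cK r0.
apply: (proj1 (compact_near_coveringP K) cK G (nbhs e)
  (fun m y => `|phi (act m y) - phi y| < r)) => y Ky.
have cF : (fun z : X * G => phi (act z.2 z.1) - phi z.1) @ (y, e) --> 0.
  have c1 : (fun z : X * G => phi (act z.2 z.1)) @ (y, e) --> phi (act e y).
    have swap : {for (y, e), continuous (fun z : X * G => (z.2, z.1))}.
      exact: swap_continuous.
    have phi_act := @continuous_comp _ _ _ (fun p : G * X => act p.1 p.2) phi (e, y)
      (act_cont (e, y)) (cphi _).
    have := @continuous_comp _ _ _ _ _ (y, e) swap phi_act; exact.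
  have c2 : (fun z : X * G => phi z.1) @ (y, e) --> phi y.
    have := @continuous_comp _ _ _ fst phi (y, e) (@cvg_fst _ _ _ _ _) (cphi _); exact.
  by rewrite -(subrr (phi y)) -{2}(act1 y); exact: cvgB.
have near_yr : \forall z \near (y, e), `|0 - (phi (act z.2 z.1) - phi z.1)| < r.
  exact: cvgr_dist_lt cF _ r0.
apply: (@filterS _ _ (filter_prod_filter (@nbhs_filter X y) (@nbhs_filter G e))
  _ _ _ near_yr) => z /=.
by rewrite sub0r normrN.
Qed.

Lemma near_act_close {phi : X -> R} (g0 : G) {r : R} :
  Cc phi -> 0 < r ->
  \forall k \near g0, forall x, `|phi (act k x) - phi (act g0 x)| < r.
Proof.
(* Where act g0 x or act k x lies in the support K, compare through
   k g0^-1 or g0 k^-1, both of which tend to e; elsewhere both sides vanish. *)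
move=> [cphi [K [cK phiK]]] r0.
have W := near_e_act_close cphi cK r0.
have cr : (fun k => mul k (inv g0)) @ g0 --> e.
  rewrite -(mulgV g0).
  have := @continuous_mul2 id (fun=> inv g0) (fun k => cvg_id) (fun k => cvg_cst _) g0; exact.
have cl : (fun k => mul g0 (inv k)) @ g0 --> e.
  rewrite -(mulgV g0).
  have := @continuous_mul2 (fun=> g0) inv (fun k => cvg_cst _) inv_cont g0; exact.
near=> k => x.
have [Kg|nKg] := pselect (K (act g0 x)).
  have : forall y, K y -> `|phi (act (mul k (inv g0)) y) - phi y| < r.
    by near: k; exact: (cr _ W).
  by move=> /(_ _ Kg); rewrite actM actK.
have [Kk|nKk] := pselect (K (act k x)).
  have : forall y, K y -> `|phi (act (mul g0 (inv k)) y) - phi y| < r.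
    by near: k; exact: (cl _ W).
  by move=> /(_ _ Kk); rewrite actM actK distrC.
by rewrite !phiK // subrr normr0.
Unshelve. all: by end_near.
Qed.

Lemma act_meas_setT a (m : {measure set borelType X -> \bar R}) :
  act_meas act_cont a m setT = m setT.
Proof. by change (m (act a @^-1` setT) = m setT); rewrite preimage_setT. Qed.

Lemma integral_act_meas a (m : {measure set borelType X -> \bar R})
    (phi : X -> R) :
  continuous phi ->
  (\int[act_meas act_cont a m]_x (phi x)%:E = \int[m]_x (phi (act a x))%:E)%E.
Proof.
move=> cphi; rewrite integral_pushm //.
by apply/measurable_EFinP; exact: continuous_borel_measurableR.
Qed.

Lemma abse_integral_act_conj_le (mu : probability (borelType X) R)
    {phi : X -> R} {M r : R} {a b c : G} :
  continuous phi -> (forall x, `|phi x| <= M) ->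
  (forall x, `|phi (act (mul (mul a b) (inv a)) x) - phi (act c x)| <= r) ->
  (`|\int[act_meas act_cont a mu]_x (phi (act c x))%:E
     - \int[act_meas act_cont a mu]_x (phi x)%:E|
   <= r%:E + `|\int[act_meas act_cont b mu]_x (phi (act a x))%:E
               - \int[mu]_x (phi (act a x))%:E|)%E.
Proof.
move=> cphi phiM close.
have cphi_a := continuous_comp_act a cphi.
have cphi_c := continuous_comp_act c cphi.
rewrite !integral_act_meas //.
have mu1 := probability_setT mu.
have meas_comp2 a' b' := continuous_borel_measurableR
  (continuous_comp_act b' (continuous_comp_act a' cphi)).
set B := (\int[mu]_x (phi (act a (act b x)))%:E)%E.
have Bfin : B \is a fin_num.
  exact: fin_num_abse_le (abse_integral_le_bound mu1 (meas_comp2 a b) (fun x => phiM _)).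
apply: (le_trans (lee_abs_subB Bfin)); apply: leeD => //.
apply: (abse_integralB_le mu1 (meas_comp2 c a) (meas_comp2 a b)
  (fun x => phiM _) (fun x => phiM _)) => x.
have conjE : act (mul (mul a b) (inv a)) (act a x) = act a (act b x).
  by rewrite -actM -mulA mulVg mulg1 actM.
by rewrite -conjE distrC; exact: close.
Qed.

Lemma act_meas_weak_limit_invariant {g h : nat -> G} {mu : probability (borelType X) R}
    {mu_inf : {measure set borelType X -> \bar R}} {g_inf : G} :
  weak_cvg (fun i => act_meas act_cont (g i) mu) mu_inf ->
  strong_cvg (fun i => act_meas act_cont (h i) mu) mu ->
  cluster ((fun i => mul (mul (g i) (h i)) (inv (g i))) @ \oo) g_inf ->
  radon_eq (act_meas act_cont g_inf mu_inf) mu_inf.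
Proof.
move=> g_mu_cvg h_mu_cvg conj_cluster phi Cc_phi.
have cphi := Cc_phi.1.
have [M phiM] := Cc_bounded Cc_phi.
have [eps [eps0 eps_bound]] := strong_cvg_bound h_mu_cvg.
have int_bounded (psi : X -> R) i : continuous psi -> (forall x, `|psi x| <= M) ->
    (`|\int[act_meas act_cont (g i) mu]_x (psi x)%:E| <= M%:E)%E.
  move=> cpsi; apply: abse_integral_le_bound (continuous_borel_measurableR cpsi).
  by rewrite act_meas_setT; exact: probability_setT.
rewrite integral_act_meas //.
apply: (@cvge_eq_frequently_close _ _ _ _ _ M _ _ (g_mu_cvg _ (Cc_act g_inf Cc_phi))
  (g_mu_cvg _ Cc_phi)).
- by move=> i; apply: (int_bounded (fun x => phi (act g_inf x)));
    [exact: continuous_comp_act | move=> x; exact: phiM].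
- by move=> i; exact: int_bounded.
move=> r r0 N.
have r20 : 0 < r / 2 by rewrite divr_gt0.
have eventually_small : \forall i \near \oo, (N <= i)%N /\ eps i * M < r / 2.
  have epsM : (fun i => eps i * M) @ \oo --> 0 by rewrite -(mul0r M); exact: cvgMl.
  near=> i; split; first by near: i; exact: nbhs_infty_ge.
  by near: i; exact: cvgr_lt epsM _ r20.
have [i [close [Ni epsi]]] := cluster_frequently conj_cluster
  (near_act_close g_inf Cc_phi r20) eventually_small.
exists i; split => //.
apply: le_trans (abse_integral_act_conj_le mu cphi phiM (fun x => ltW (close x))) _.
have mphi_g := continuous_borel_measurableR (continuous_comp_act (g i) cphi).
apply: le_trans (leeD2l _ (eps_bound i _ M mphi_g (fun x => phiM _))) _.
by rewrite -EFinD lee_fin; lra.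
Unshelve. all: by end_near.
Qed.

End group_action.

Theorem mainTheorem15
  (R : realType)
  (G : topologicalType) (mul : G -> G -> G) (inv : G -> G) (e : G)
  (mulA : forall a b c, mul a (mul b c) = mul (mul a b) c)
  (mul1g : forall a, mul e a = a)
  (mulVg : forall a, mul (inv a) a = e)
  (mul_cont : continuous (fun p : G * G => mul p.1 p.2))
  (inv_cont : continuous inv)
  (G_hausdorff : hausdorff_space G)
  (G_lc : locally_compact [set: G])
  (X : ptopologicalType)
  (X_hausdorff : hausdorff_space X)
  (X_lc : locally_compact [set: X])
  (act : G -> X -> X)
  (act1 : forall x, act e x = x)
  (actM : forall a b x, act (mul a b) x = act a (act b x))
  (act_cont : continuous (fun p : G * X => act p.1 p.2))
  (g h : nat -> G)
  (mu : probability (borelType X) R)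
  (mu_inf : {measure set (borelType X) -> \bar R})
  (g_inf : G) :
  weak_cvg (fun i => act_meas act_cont (g i) mu) mu_inf ->
  h @ \oo --> e ->
  strong_cvg (fun i => act_meas act_cont (h i) mu) mu ->
  cluster ((fun i => mul (mul (g i) (h i)) (inv (g i))) @ \oo) g_inf ->
  radon_eq (act_meas act_cont g_inf mu_inf) mu_inf.
Proof.
move=> g_mu_cvg _ h_mu_cvg conj_cluster.
exact: (act_meas_weak_limit_invariant mulA mul1g mulVg mul_cont inv_cont
  act1 actM act_cont g_mu_cvg h_mu_cvg conj_cluster).
Qed.
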